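(* Let $m<M$ be real numbers and let $X$ be a random variable taking values in $[m,M]$, either discrete (taking finitely many values $x_1,\dots,x_n\in[m,M]$ with probabilities $p_1,\dots,p_n$) or continuous (with probability density $f$ on $[m,M]$). Let $\mu_3$ be its third central moment. Then $$|\mu_3|\le\frac{(M-m)^3}{6\sqrt3}.$$
   Context: The mean is $\mu_1'=\sum_{i=1}^n p_i x_i$ (discrete case) or $\mu_1'=\int_m^M x f(x)\,dx$ (continuous case), where $\sum p_i=1$, resp. $\int_m^M f(x)\,dx=1$. The $r$-th central moment is $\mu_r=\sum_{i=1}^n p_i (x_i-\mu_1')^r$, resp. $\mu_r=\int_m^M (x-\mu_1')^r f(x)\,dx$. *)

From mathcomp Require Import all_boot all_order all_algebra.
From mathcomp Require Import all_classical all_reals all_analysis.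
Set Implicit Arguments. Unset Strict Implicit. Unset Printing Implicit Defensive.
Import Order.TTheory GRing.Theory Num.Theory.
Import numFieldNormedType.Exports.
Local Open Scope classical_set_scope.
Local Open Scope ring_scope.

Definition disc_mean (R : realType) (n : nat) (p x : 'I_n -> R) : R :=
  \sum_(i < n) p i * x i.

Definition disc_central_moment (R : realType) (n : nat) (p x : 'I_n -> R)
  (r : nat) : R :=
  \sum_(i < n) p i * (x i - disc_mean p x) ^+ r.

Definition cont_mean (R : realType) (m M : R) (f : R -> R) : R :=
  Rintegral lebesgue_measure `[m, M] (fun x => x * f x).

Definition cont_central_moment (R : realType) (m M : R) (f : R -> R)
  (r : nat) : R :=
  Rintegral lebesgue_measure `[m, M]
    (fun x => (x - cont_mean m M f) ^+ r * f x).

From mathcomp Require Import all_boot all_order all_algebra.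
From mathcomp Require Import all_classical all_reals all_analysis.
From mathcomp Require Import ring lra.
Import Order.TTheory GRing.Theory Num.Theory.
Import numFieldNormedType.Exports.
Local Open Scope classical_set_scope.
Local Open Scope ring_scope.

(* The law of X - mu lives on [-a, b] with a = mu - m and b = M - mu; let S and
   T be its second and third moments. Integrating the nonnegative cubics
   (y + a)(b - y) and (y - t)^2 (b - y) gives S <= a b and
   T <= t^2 b + (b + 2 t) S for every t; the choice t = - S / b leaves
   T <= S (b^2 - S) / b, whose maximum over 0 <= S <= a b is at most
   (a + b)^3 / (6 sqrt 3). The reflection y -> - y bounds - T in the same
   way. *)

(* [1, 0, S, T] are the moments of orders 0 to 3 of a law on [-a, b], as far as
   integrating cubics that are nonnegative on [-a, b] can tell. *)
Definition centered_cubic_moments {R : realType} (a b S T : R) : Prop :=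
  forall c0 c1 c2 c3 : R,
    (forall y, - a <= y <= b -> 0 <= c0 + c1 * y + c2 * y ^+ 2 + c3 * y ^+ 3) ->
    0 <= c0 + c2 * S + c3 * T.

Section CenteredCubicMoments.
Context {R : realType} {a b S T : R}.
Hypothesis mom : centered_cubic_moments a b S T.

Lemma centered_cubic_moments_sym : centered_cubic_moments b a S (- T).
Proof.
move=> c0 c1 c2 c3 q_ge0.
have := mom c0 (- c1) c2 (- c3); rewrite mulrN mulNr.
apply=> y /andP[lo hi]; have := q_ge0 (- y).
suff -> : c0 + - c1 * y + c2 * y ^+ 2 + - c3 * y ^+ 3
  = c0 + c1 * - y + c2 * (- y) ^+ 2 + c3 * (- y) ^+ 3 by apply; lra.
ring.
Qed.

Lemma centered_cubic_moments_bnd_ge0 : 0 <= a /\ 0 <= b.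
Proof.
split.
- by have := mom a 1 0 0; rewrite !mul0r !addr0; apply=> y /andP[]; lra.
- by have := mom b (-1) 0 0; rewrite !mul0r !addr0; apply=> y /andP[]; lra.
Qed.

Lemma centered_cubic_moments_var_ge0 : 0 <= S.
Proof.
by have := mom 0 0 1 0; rewrite mul0r add0r addr0 mul1r; apply=> y _; nra.
Qed.

Lemma centered_cubic_moments_var_le : S <= a * b.
Proof.
suff : 0 <= a * b + -1 * S + 0 * T by lra.
apply: (mom _ (b - a)) => y /andP[lo hi].
have : 0 <= (y + a) * (b - y) by apply: mulr_ge0; lra.
nra.
Qed.

Lemma centered_cubic_moments_third_le t : T <= t ^+ 2 * b + (b + 2 * t) * S.
Proof.
suff : 0 <= t ^+ 2 * b + (b + 2 * t) * S + -1 * T by lra.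
apply: (mom _ (- (t ^+ 2 + 2 * t * b))) => y /andP[lo hi].
have : 0 <= (y - t) ^+ 2 * (b - y) by apply: mulr_ge0; [exact: sqr_ge0|lra].
suff -> : (y - t) ^+ 2 * (b - y) = t ^+ 2 * b + - (t ^+ 2 + 2 * t * b) * y
  + (b + 2 * t) * y ^+ 2 + -1 * y ^+ 3 by [].
ring.
Qed.

End CenteredCubicMoments.

(* With [s := (b - a) / 2], [d := a + b] and [r := sqrt 3], the difference
   [d^3 - 6 r a b (b - a)] equals [12 r (s - d r / 6)^2 (s + d r / 3)]. *)
Lemma sqrt3_mulB_le_cube {R : realType} (a b : R) : 0 <= a -> 0 <= b ->
  6 * Num.sqrt 3 * (a * b * (b - a)) <= (a + b) ^+ 3.
Proof.
move=> a0 b0; set r := Num.sqrt 3.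
have r0 : 0 < r by rewrite sqrtr_gt0; lra.
have r2 : r ^+ 2 = 3 by rewrite sqr_sqrtr //; lra.
set s := (b - a) / 2; set d := a + b.
have -> : d ^+ 3 = 6 * r * (a * b * (b - a))
    + 12 * r * (s - d * r / 6) ^+ 2 * (s + d * r / 3)
    + (r ^+ 2 - 3) * (d ^+ 2 * s * r - d ^+ 3 * (r ^+ 2 + 3) / 9).
  by rewrite /s /d; field.
rewrite r2 subrr mul0r addr0.
rewrite lerDl; apply: mulr_ge0; first by apply: mulr_ge0; [lra|exact: sqr_ge0].
have : 3 / 2 <= r by nra.
rewrite /s /d; nra.
Qed.

(* [S (b^2 - S)] is maximal over [0 <= S <= a b] at [S = a b] when
   [2 a <= b], and at [S = b^2 / 2] otherwise. *)
Lemma sqrt3_mul_sqrB_le_cube {R : realType} (a b S : R) :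
  0 <= a -> 0 <= b -> 0 <= S -> S <= a * b ->
  6 * Num.sqrt 3 * (S * (b ^+ 2 - S)) <= b * (a + b) ^+ 3.
Proof.
move=> a0 b0 S0 Sab; set r := Num.sqrt 3.
have r0 : 0 < r by rewrite sqrtr_gt0; lra.
have r2 : r ^+ 2 = 3 by rewrite sqr_sqrtr //; lra.
have [a2b|b_lt_2a] := lerP (2 * a) b.
- have key := sqrt3_mulB_le_cube a b a0 b0; rewrite -/r in key.
  have : 0 <= b ^+ 2 - a * b - S.
    have : 0 <= b * (b - 2 * a) by apply: mulr_ge0; lra.
    nra.
  have : 0 <= (a * b - S) * (b ^+ 2 - a * b - S) by apply: mulr_ge0; nra.
  nra.
- have Sb : S * (b ^+ 2 - S) <= b ^+ 4 / 4.
    have := sqr_ge0 (S - b ^+ 2 / 2); nra.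
  have r94 : r <= 9 / 4 by nra.
  have cube_le : (3 * b) ^+ 3 <= (2 * (a + b)) ^+ 3.
    by apply: lerXn2r; rewrite ?nnegrE; lra.
  rewrite !exprMn in cube_le.
  have b3 : 0 <= b ^+ 3 by exact: exprn_ge0.
  apply: (le_trans (y := 6 * r * (b ^+ 4 / 4))).
    by rewrite ler_pM2l //; nra.
  have -> : 6 * r * (b ^+ 4 / 4) = b * (3 * r / 2 * b ^+ 3).
    by rewrite exprS; field.
  apply: ler_wpM2l => //.
  move: cube_le; rewrite (_ : 3 ^+ 3 = 27 :> R); last first.
    by rewrite !exprS expr0; lra.
  rewrite (_ : 2 ^+ 3 = 8 :> R); last by rewrite !exprS expr0; lra.
  nra.
Qed.

Lemma centered_cubic_moments_third_le_cube {R : realType} {a b S T : R} :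
  centered_cubic_moments a b S T -> T <= (a + b) ^+ 3 / (6 * Num.sqrt 3).
Proof.
move=> mom; set r := Num.sqrt 3.
have [a0 b0] := centered_cubic_moments_bnd_ge0 mom.
have S0 := centered_cubic_moments_var_ge0 mom.
have Sab := centered_cubic_moments_var_le mom.
have r0 : 0 < r by rewrite sqrtr_gt0; lra.
have cube_ge0 : 0 <= (a + b) ^+ 3 / (6 * r).
  by apply: divr_ge0; [apply: exprn_ge0; lra|nra].
have [b_eq0|b_neq0] := eqVneq b 0.
  have S_eq0 : S = 0 by move: Sab; rewrite b_eq0 mulr0; lra.
  have T_le0 : T <= 0.
    by have := centered_cubic_moments_third_le mom 0; rewrite b_eq0 S_eq0; lra.
  exact: le_trans T_le0 cube_ge0.
have b_gt0 : 0 < b by rewrite lt_def b_neq0.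
(* [t = - S / b] minimizes the bound of [centered_cubic_moments_third_le]. *)
have := centered_cubic_moments_third_le mom (- S / b).
have -> : (- S / b) ^+ 2 * b + (b + 2 * (- S / b)) * S = S * (b ^+ 2 - S) / b.
  by field.
rewrite ler_pdivlMr // => Tb; rewrite ler_pdivlMr; last nra.
have := sqrt3_mul_sqrB_le_cube a b S a0 b0 S0 Sab; rewrite -/r; nra.
Qed.

Lemma centered_cubic_moments_abs_third_le {R : realType} {a b S T : R} :
  centered_cubic_moments a b S T -> `|T| <= (a + b) ^+ 3 / (6 * Num.sqrt 3).
Proof.
move=> mom; rewrite ler_norml lerNl (centered_cubic_moments_third_le_cube mom).
by rewrite andbT addrC; exact: centered_cubic_moments_third_le_cube
  (centered_cubic_moments_sym mom).
Qed.

Lemma disc_centered_cubic_moments {R : realType} {m M : R} {n : nat}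
    {p x : 'I_n -> R} :
  (forall i, 0 <= p i) -> \sum_(i < n) p i = 1 -> (forall i, m <= x i <= M) ->
  centered_cubic_moments (disc_mean p x - m) (M - disc_mean p x)
    (disc_central_moment p x 2) (disc_central_moment p x 3).
Proof.
move=> p_ge0 p_sum1 x_in c0 c1 c2 c3 q_ge0.
rewrite /disc_central_moment; set mu := disc_mean p x.
have centered : \sum_(i < n) p i * (x i - mu) = 0.
  under eq_bigr do rewrite mulrBr.
  by rewrite sumrB -mulr_suml p_sum1 mul1r subrr.
have -> : c0 + c2 * (\sum_(i < n) p i * (x i - mu) ^+ 2)
    + c3 * (\sum_(i < n) p i * (x i - mu) ^+ 3) = \sum_(i < n) p i *
    (c0 + c1 * (x i - mu) + c2 * (x i - mu) ^+ 2 + c3 * (x i - mu) ^+ 3).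
  rewrite [RHS](eq_bigr (fun i => c0 * p i + c1 * (p i * (x i - mu))
    + c2 * (p i * (x i - mu) ^+ 2) + c3 * (p i * (x i - mu) ^+ 3))); last first.
    by move=> i _; ring.
  by rewrite !big_split /= -!mulr_sumr p_sum1 centered; ring.
apply: sumr_ge0 => i _; apply: mulr_ge0 => //; apply: q_ge0.
by have /andP[] := x_in i; rewrite -/mu => *; apply/andP; split; lra.
Qed.

Section RealIntegrable.
Context {d : measure_display} {T : measurableType d} {R : realType}.
Context (mu : {measure set T -> \bar R}) {D : set T}.
Hypothesis mD : measurable D.

Lemma integrable_EFinZ (c : R) (g : T -> R) :
  mu.-integrable D (EFin \o g) -> mu.-integrable D (EFin \o (fun x => c * g x)).
Proof.
move=> ig.
have -> : EFin \o (fun x => c * g x) = (fun x => c%:E * (EFin \o g) x)%E.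
  by apply/funext => x /=; rewrite EFinM.
exact: integrableZl.
Qed.

Lemma integrable_EFinD (g h : T -> R) :
  mu.-integrable D (EFin \o g) -> mu.-integrable D (EFin \o h) ->
  mu.-integrable D (EFin \o (fun x => g x + h x)).
Proof.
move=> ig ih.
have -> : EFin \o (fun x => g x + h x) = ((EFin \o g) \+ (EFin \o h))%E.
  by apply/funext => x /=; rewrite EFinD.
exact: integrableD.
Qed.

Lemma integrable_bounded_EFinM (C : R) (h g : T -> R) :
  measurable_fun D h -> (forall x, D x -> `|h x| <= C) ->
  mu.-integrable D (EFin \o g) ->
  mu.-integrable D (EFin \o (fun x => h x * g x)).
Proof.
move=> mh h_le ig.
have -> : EFin \o (fun x => h x * g x) = ((EFin \o h) \* (EFin \o g))%E.
  by apply/funext => x /=; rewrite EFinM.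
apply: integrableMr => //; exists C; split; first exact: num_real.
by move=> B C_lt_B x Dx; apply: le_trans (h_le x Dx) _; exact: ltW.
Qed.

End RealIntegrable.

Section ContinuousMoments.
Context {R : realType} {m M : R} {f : R -> R}.
Hypothesis f_int : lebesgue_measure.-integrable `[m, M] (EFin \o f).

Let mI : measurable (`[m, M] : set R). Proof. exact: measurable_itv. Qed.

Lemma integrable_centered_powf (c : R) (k : nat) :
  lebesgue_measure.-integrable `[m, M] (EFin \o (fun x => (x - c) ^+ k * f x)).
Proof.
apply: (integrable_bounded_EFinM lebesgue_measure mI
  ((`|m| + `|M| + `|c|) ^+ k)) => //.
  exact/measurable_realfun.measurable_funX/measurable_realfun.measurable_funB.
move=> x; rewrite /= in_itv /= => /andP[mx xM].
rewrite normrX; apply: lerXn2r; rewrite ?nnegrE //.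
apply: le_trans (ler_normB _ _) _; rewrite lerD2r.
have := ler_norm M; have := ler_norm (- m); rewrite normrN ler_norml.
by have := normr_ge0 m; have := normr_ge0 M; lra.
Qed.

Hypothesis f_ge0 : forall x, m <= x <= M -> 0 <= f x.
Hypothesis f_mass1 : (\int[lebesgue_measure]_(x in `[m, M]) (f x)%:E = 1%:E)%E.

Lemma Rintegral_centered_cubic (c0 c1 c2 c3 : R) :
  let g k x := (x - cont_mean m M f) ^+ k * f x in
  Rintegral lebesgue_measure `[m, M]
    (fun x => c0 * g 0 x + c1 * g 1 x + c2 * g 2 x + c3 * g 3 x) =
  c0 + c2 * cont_central_moment m M f 2 + c3 * cont_central_moment m M f 3.
Proof.
move=> g; set mu := cont_mean m M f.
have ig k : lebesgue_measure.-integrable `[m, M] (EFin \o g k).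
  exact: integrable_centered_powf.
have igZ k c :
    lebesgue_measure.-integrable `[m, M] (EFin \o (fun x => c * g k x)).
  exact: integrable_EFinZ.
have f_one : Rintegral lebesgue_measure `[m, M] f = 1.
  by rewrite /Rintegral f_mass1.
have centered : Rintegral lebesgue_measure `[m, M] (g 1) = 0.
  have ix : lebesgue_measure.-integrable `[m, M] (EFin \o (fun x => x * f x)).
    rewrite (_ : (fun x => x * f x) = (fun x => (x - 0) ^+ 1 * f x)).
      exact: integrable_centered_powf.
    by apply/funext => x; rewrite subr0 expr1.
  rewrite (_ : g 1 = (fun x => x * f x - mu * f x)); last first.
    by apply/funext => x; rewrite /g expr1 mulrBl.
  rewrite RintegralB //; last exact: integrable_EFinZ.
  by rewrite RintegralZl // f_one mulr1 subrr.
rewrite !RintegralD //; try by repeat apply: integrable_EFinD.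
by rewrite !RintegralZl // mul1r f_one centered mulr1 mulr0 addr0.
Qed.

Lemma cont_centered_cubic_moments :
  centered_cubic_moments (cont_mean m M f - m) (M - cont_mean m M f)
    (cont_central_moment m M f 2) (cont_central_moment m M f 3).
Proof.
move=> c0 c1 c2 c3 q_ge0; rewrite -(Rintegral_centered_cubic c0 c1).
apply: Rintegral_ge0 => x; rewrite /= in_itv /= => /andP[mx xM].
set y := x - cont_mean m M f.
have -> : c0 * (y ^+ 0 * f x) + c1 * (y ^+ 1 * f x) + c2 * (y ^+ 2 * f x)
    + c3 * (y ^+ 3 * f x) = (c0 + c1 * y + c2 * y ^+ 2 + c3 * y ^+ 3) * f x.
  by ring.
apply: mulr_ge0; last by apply: f_ge0; rewrite mx xM.
by apply: q_ge0; rewrite /y; apply/andP; split; lra.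
Qed.

End ContinuousMoments.

Theorem theorem2p3 (R : realType) (m M : R) (hmM : m < M) :
  (* discrete case *)
  (forall (n : nat) (p x : 'I_n -> R),
      (forall i, 0 <= p i) ->
      \sum_(i < n) p i = 1 ->
      (forall i, m <= x i <= M) ->
      `|disc_central_moment p x 3| <= (M - m) ^+ 3 / (6 * Num.sqrt 3))
  /\
  (* continuous case *)
  (forall f : R -> R,
      measurable_fun `[m, M] f ->
      (forall x, m <= x <= M -> 0 <= f x) ->
      lebesgue_measure.-integrable `[m, M] (EFin \o f) ->
      (\int[lebesgue_measure]_(x in `[m, M]) (f x)%:E = 1%:E)%E ->
      `|cont_central_moment m M f 3| <= (M - m) ^+ 3 / (6 * Num.sqrt 3)).
Proof.
split=> [n p x p_ge0 p_sum1 x_in|f _ f_ge0 f_int f_mass1].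
- have := centered_cubic_moments_abs_third_le
    (disc_centered_cubic_moments p_ge0 p_sum1 x_in).
  by rewrite addrC addrA subrK.
- have := centered_cubic_moments_abs_third_le
    (cont_centered_cubic_moments f_int f_ge0 f_mass1).
  by rewrite addrC addrA subrK.
Qed.
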